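(* In the sequential execution of a structured local-touch computation in which the future thread at every fork is chosen to execute first: for every touch $x$, the future parent of $x$ is executed before the local parent of $x$; and for every fork $v$, the right child of $v$ is the node executed immediately after the last node of the future thread spawned at $v$.
   Context: Computation model. A future-parallel computation is a finite DAG whose nodes are tasks. Every node has in-degree and out-degree in $\{1,2\}$, except a distinguished root node (in-degree $0$) and a distinguished final node (out-degree $0$). Edges are continuation edges, future edges and touch edges. A thread is a maximal chain of nodes connected by continuation edges. The main thread begins at the root and ends at the final node. Every other thread $t$ begins at a node with an incoming future edge from a node $v$ of another thread $t'$; then $v$ is the fork of $t$, $t'$ is the parent thread of $t$, and $t$ is the future thread at $v$. A fork $v$ has two children: the first node of $t$ (the left child) and the continuation successor of $v$ in $t'$ (the right child); both have in-degree $1$ and are not touches. The last node of every non-main thread has exactly one outgoing edge, a touch edge into another thread. If there is a touch edge from node $v_1$ of thread $t_1$ to node $v_2$ of thread $t_2\neq t_1$, and a continuation edge from $u_2$ to $v_2$, then $v_2$ is a touch of $t_1$, $v_1$ its future parent, $u_2$ its local parent. A node $w$ is a descendant of $u$ if there is a directed path from $u$ to $w$. A DAG is a structured future-parallel computation if for the future thread $t$ of any fork $v$: (1) the local parents of the touches of $t$ are descendants of $v$, and (2) at least one touch of $t$ is a descendant of the right child of $v$. It is a structured local-touch computation if, in addition, each future thread $t$ spawned at a fork $v$ is touched only at nodes of the parent thread of $t$, and all these touches are descendants of the right child of $v$ (a future thread may have several touches). Scheduler. In parsimonious work stealing each processor has a deque. A node is ready when all its parents have been executed. After executing a node of out-degree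 1, a processor continues with its child if ready. After a fork it executes the left child (future thread first) and pushes the right child onto the bottom of its deque. A processor with nothing to execute pops the bottom of its own deque if nonempty, and otherwise steals the top node of another processor's deque. The sequential execution is the execution with one processor.
   Formalization: Every touch edge of the computation starts at a node outside the main thread, so only future threads are ever touched. The paper assumes this as well. *)

From mathcomp Require Import all_boot.
Set Implicit Arguments. Unset Strict Implicit. Unset Printing Implicit Defensive.

Inductive ekind := Cont | Fut | Tch.

(* A computation DAG on a finite node type [V]: [kind u v = Some k] iff there
   is an edge of kind [k] from [u] to [v]; distinguished root and final node. *)
Record fcomp (V : finType) := Comp {
  kind : V -> V -> option ekind;
  root : V;
  final : V
}.

Section Defs.
Variables (V : finType) (C : fcomp V).

Definition cont : rel V := fun u v => if kind C u v is Some Cont then true else false.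
Definition fut  : rel V := fun u v => if kind C u v is Some Fut  then true else false.
Definition tch  : rel V := fun u v => if kind C u v is Some Tch  then true else false.
Definition edge : rel V := fun u v => if kind C u v is Some _ then true else false.

Definition indeg (v : V) : nat := #|[pred u | edge u v]|.
Definition outdeg (v : V) : nat := #|[pred w | edge v w]|.

Definition desc (u w : V) : bool := connect edge u w.

(* threads = maximal continuation chains *)
Definition same_thread (u v : V) : bool := connect cont u v || connect cont v u.
Definition first_node (v : V) : bool := [forall u, ~~ cont u v].
Definition last_node (v : V) : bool := [forall w, ~~ cont v w].
Definition in_main (v : V) : bool := same_thread (root C) v.

(* v2 is a touch (with future parent v1 and local parent u2) *)
Definition touch_with (v1 u2 v2 : V) : bool :=
  [&& tch v1 v2, ~~ same_thread v1 v2 & cont u2 v2].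
Definition is_touch (v2 : V) : bool := [exists v1, exists u2, touch_with v1 u2 v2].

Definition wf_comp : Prop :=
  (forall u v, edge u v -> ~~ connect edge v u) /\
  (forall v, if v == root C then indeg v = 0 else 1 <= indeg v <= 2) /\
  (forall v, if v == final C then outdeg v = 0 else 1 <= outdeg v <= 2) /\
  (forall u v w, cont u v -> cont u w -> v = w) /\
  (forall u v w, cont u w -> cont v w -> u = v) /\
  same_thread (root C) (final C) /\
  (forall v, first_node v -> ~~ in_main v ->
     exists u, fut u v /\ ~~ same_thread u v) /\
  (* forks: the left child is the first node of the future thread, the right
     child is the continuation successor; both have in-degree 1, no touches *)
  (forall u l, fut u l ->
     [/\ first_node l, ~~ same_thread u l, indeg l = 1, ~~ is_touch l &
      exists r, [/\ cont u r, indeg r = 1 & ~~ is_touch r]]) /\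
  (forall v, last_node v -> ~~ in_main v ->
     outdeg v = 1 /\ exists w, tch v w /\ ~~ same_thread v w) /\
  (* (implicit in the model) touch edges leave future threads *)
  (forall u v, tch u v -> ~~ in_main u).

(* "touch of the future thread spawned at the fork v with left child l":
   a touch whose future parent lies in the thread of l *)
Definition structured : Prop :=
  forall v l r, fut v l -> cont v r ->
    (forall v1 u2 x, same_thread l v1 -> touch_with v1 u2 x -> desc v u2) /\
    (exists v1 u2 x, [/\ same_thread l v1, touch_with v1 u2 x & desc r x]).

Definition structured_local_touch : Prop :=
  structured /\
  forall v l r, fut v l -> cont v r ->
    forall v1 u2 x, same_thread l v1 -> touch_with v1 u2 x ->
      same_thread v x /\ desc r x.

(* Sequential parsimonious work stealing. A configuration is
   (node to execute now (if any), deque (bottom = end of list),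
    executed nodes in execution order). *)
Definition config := (option V * seq V * seq V)%type.

Definition ready (done : seq V) (w : V) : bool :=
  [forall u, edge u w ==> (u \in done)].

Definition ready_children (done : seq V) (v : V) : seq V :=
  [seq w <- enum V | edge v w && ready done w].

Inductive seq_step : config -> config -> Prop :=
  | step_fork v l r dq d :
      fut v l -> cont v r ->
      seq_step (Some v, dq, d) (Some l, rcons dq r, rcons d v)
  | step_stall v dq d :
      (forall w, ~~ fut v w) -> ready_children (rcons d v) v = [::] ->
      seq_step (Some v, dq, d) (None, dq, rcons d v)
  (* non-fork node: continue with a ready child (any remaining ready child,
     possible only for a non-fork node of out-degree 2, is pushed) *)
  | step_cont v w rest dq d :
      (forall w', ~~ fut v w') ->
      perm_eq (w :: rest) (ready_children (rcons d v) v) ->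
      seq_step (Some v, dq, d) (Some w, dq ++ rest, rcons d v)
  | step_pop w dq d :
      seq_step (None, rcons dq w, d) (Some w, dq, d).

Inductive seq_steps : config -> config -> Prop :=
  | steps_refl c : seq_steps c c
  | steps_trans c1 c2 c3 : seq_step c1 c2 -> seq_steps c2 c3 -> seq_steps c1 c3.

Definition sequential_execution (ex : seq V) : Prop :=
  seq_steps (Some (root C), [::], [::]) (None, [::], ex).

End Defs.

From Pilot Require Import Defs.
From mathcomp Require Import all_boot.
Set Implicit Arguments. Unset Strict Implicit. Unset Printing Implicit Defensive.

(* We follow the one-processor parsimonious work-stealing execution step by
   step and show that every reachable configuration satisfies an invariant:
   - the executed prefix lists every node after all its parents (it is a
     topological prefix) and each executed right child of a fork comes
     immediately after the last node of the future thread spawned there;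
   - the deque holds, outermost first, the right children of the forks whose
     future threads enclose the current node (its "spine"); they are ready
     and not yet executed;
   - the current node is ready, and if it is a right child, the last node of
     the corresponding future thread was the last node executed.
   The key step is that a node's continuation child becomes ready as soon as
   the node is executed: a touch parent of it belongs to a future thread whose
   right child precedes it (local touches), hence is already executed.  In
   the final configuration every node has been executed, and both claims of
   the theorem are read off from the invariant. *)

Section Reachability.
Variable T : finType.
Implicit Types (e : rel T) (x y : T).

Lemma connect_last_step e x y :
  connect e x y -> x != y -> exists2 p, connect e x p & e p y.
Proof.
move/connectP=> [s]; elim/last_ind: s => [|s z _] /=; first by move=> _ -> /eqP.
rewrite rcons_path last_rcons => /andP[hp he] -> _.
by exists (last x s) => //; apply/connectP; exists s.
Qed.

Lemma connect_first_step e x y :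
  connect e x y -> x != y -> exists2 q, e x q & connect e q y.
Proof.
move/connectP=> [[|q s]] /=; first by move=> _ -> /eqP.
by move=> /andP[he hp] -> _; exists q => //; apply/connectP; exists s.
Qed.

Lemma connect_functional_comparable e a x y :
  (forall u v w, e u v -> e u w -> v = w) ->
  connect e a x -> connect e a y -> connect e x y || connect e y x.
Proof.
move=> efun /connectP[s]; elim: s a => [|b s IH] a /=; first by move=> _ -> ->.
move=> /andP[hab hp] hx hy.
have [->|nya] := eqVneq y a.
  by apply/orP; right; apply/connectP; exists (b :: s) => //=; rewrite hab.
have [q haq hq] : exists2 q, e a q & connect e q y.
  by apply: connect_first_step hy _; rewrite eq_sym.
by apply: IH hp hx _; rewrite -(efun _ _ _ haq hab).
Qed.

(* The measure is the number of ancestors, which decreases along edges. *)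
Lemma acyclic_ind_pred e (acyc : forall u v, e u v -> ~~ connect e v u)
  (P : T -> Prop) :
  (forall x, (forall u, e u x -> P u) -> P x) -> forall x, P x.
Proof.
move=> IH.
have hlt u x : e u x -> #|[pred y | connect e y u]| < #|[pred y | connect e y x]|.
  move=> hu; apply/proper_card/properP; split.
    by apply/subsetP=> y; rewrite !inE => hy; apply: connect_trans hy (connect1 hu).
  by exists x; rewrite inE ?connect0 ?acyc.
suff ind : forall n x, #|[pred y | connect e y x]| <= n -> P x.
  by move=> x; apply: ind _ x (leqnn _).
elim=> [|n IHn] x hx; apply: IH => u /hlt hu; first by have := leq_trans hu hx.
by apply: IHn; rewrite -ltnS; apply: leq_trans hu hx.
Qed.

Lemma acyclic_ind_succ e (acyc : forall u v, e u v -> ~~ connect e v u)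
  (P : T -> Prop) :
  (forall x, (forall w, e x w -> P w) -> P x) -> forall x, P x.
Proof.
move=> IH; apply: (@acyclic_ind_pred [rel a b | e b a]) => [u v /= hvu|//].
by rewrite connect_rev; apply: acyc.
Qed.
End Reachability.

Section Positions.
Variable T : eqType.

Lemma index_lt_split (s : seq T) a b : a \in s -> b \in s -> index a s < index b s ->
  exists s1 s2 s3, s = s1 ++ a :: s2 ++ b :: s3.
Proof.
elim: s => // x s IH; rewrite !inE /=.
have [<-|nxa] := eqVneq x a.
  have [<-|nxb] := eqVneq x b; first by rewrite ltnn.
  by move=> _ /= /splitPr[s2 s3] _; exists [::], s2, s3.
have [<-|nxb] := eqVneq x b; first by [].
move=> /= ha hb /(IH ha hb)[s1 [s2 [s3 ->]]].
by exists (x :: s1), s2, s3.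
Qed.

Lemma index_adjacent (s1 s2 : seq T) z r : uniq (s1 ++ z :: r :: s2) ->
  index z (s1 ++ z :: r :: s2) < index r (s1 ++ z :: r :: s2).
Proof.
rewrite cat_uniq => /and3P[_ hdis /= /andP[]]; rewrite inE negb_or => /andP[nzr _] _.
have [hz hr] : z \notin s1 /\ r \notin s1.
  by split; apply/negP=> h; move/hasP: hdis; apply; [exists z|exists r]; rewrite ?inE ?eqxx ?orbT.
by rewrite !index_cat (negbTE hz) (negbTE hr) /= eqxx (negbTE nzr) eqxx ltn_add2l.
Qed.
End Positions.

Section Computation.
Variables (V : finType) (C : fcomp V).
Hypothesis Hwf : wf_comp C.
Hypothesis Hslt : structured_local_touch C.

Lemma cont_edge u v : cont C u v -> edge C u v.
Proof. by rewrite /cont /edge; case: kind. Qed.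

Lemma fut_edge u v : fut C u v -> edge C u v.
Proof. by rewrite /fut /edge; case: kind. Qed.

Lemma tch_edge u v : tch C u v -> edge C u v.
Proof. by rewrite /tch /edge; case: kind. Qed.

Lemma edge_kinds u v : edge C u v -> [\/ cont C u v, fut C u v | tch C u v].
Proof. by rewrite /cont /fut /tch /edge; case: kind => [[]|] // _; constructor. Qed.

Lemma cont_not_tch u v : cont C u v -> ~~ tch C u v.
Proof. by rewrite /cont /tch; case: kind => [[]|]. Qed.

Lemma cont_not_fut u v : cont C u v -> ~~ fut C u v.
Proof. by rewrite /cont /fut; case: kind => [[]|]. Qed.

Lemma fut_not_tch u v : fut C u v -> ~~ tch C u v.
Proof. by rewrite /fut /tch; case: kind => [[]|]. Qed.

Lemma cont_path_edge x y : connect (cont C) x y -> connect (edge C) x y.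
Proof. by apply: connect_sub => u v /cont_edge /connect1. Qed.

Lemma edge_acyclic u v : edge C u v -> ~~ connect (edge C) v u.
Proof. by case: Hwf => h _; apply: h. Qed.

Lemma edge_neq u v : edge C u v -> u != v.
Proof. by move=> /edge_acyclic; apply: contra => /eqP->. Qed.

Lemma cont_functional u v w : cont C u v -> cont C u w -> v = w.
Proof. by case: Hwf => _ [_ [_ [h _]]]; apply: h. Qed.

Lemma cont_injective u v w : cont C u w -> cont C v w -> u = v.
Proof. by case: Hwf => _ [_ [_ [_ [h _]]]]; apply: h. Qed.

Lemma fork_shape u l : fut C u l ->
  [/\ first_node C l, ~~ same_thread C u l, indeg C l = 1, ~~ is_touch C l &
      exists r, [/\ cont C u r, indeg C r = 1 & ~~ is_touch C r]].
Proof. by case: Hwf => _ [_ [_ [_ [_ [_ [_ [h _]]]]]]]; apply: h. Qed.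

Lemma tch_not_main u v : tch C u v -> ~~ in_main C u.
Proof. by case: Hwf => _ [_ [_ [_ [_ [_ [_ [_ [_ h]]]]]]]]; apply: h. Qed.

Lemma thread_spawned v : first_node C v -> ~~ in_main C v -> exists u, fut C u v.
Proof.
by case: Hwf => _ [_ [_ [_ [_ [_ [h _]]]]]] hf hm; have [u [hu _]] := h v hf hm; exists u.
Qed.

Lemma indeg1_parent x a b : indeg C x = 1 -> edge C a x -> edge C b x -> a = b.
Proof.
rewrite /indeg => /eqP/card1P[z hz] ha hb.
by move: (hz a) (hz b); rewrite !inE ha hb => /esym/eqP-> /esym/eqP->.
Qed.

Lemma root_no_parent u : ~~ edge C u (Defs.root C).
Proof.
apply/negP=> h; case: Hwf => _ [/(_ (Defs.root C)) + _]; rewrite eqxx /indeg => /eqP.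
by apply/negP; rewrite -lt0n; apply/card_gt0P; exists u; rewrite inE.
Qed.

Lemma final_last : last_node C (final C).
Proof.
apply/forallP=> w; apply/negP=> /cont_edge hw.
case: Hwf => _ [_ [/(_ (final C)) + _]]; rewrite eqxx /outdeg => /eqP.
by apply/negP; rewrite -lt0n; apply/card_gt0P; exists w; rewrite inE.
Qed.

(* Every node reaches the final node: it is the only node without children. *)
Lemma reach_final x : connect (edge C) x (final C).
Proof.
elim/(acyclic_ind_succ edge_acyclic): x => x IH.
have [->|nxf] := eqVneq x (final C); first exact: connect0.
have : 0 < outdeg C x.
  by case: Hwf => _ [_ [/(_ x) + _]]; rewrite (negbTE nxf) => /andP[].
by case/card_gt0P => w; rewrite inE => hw; apply: connect_trans (connect1 hw) (IH w hw).
Qed.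

(* A fork has a single future child: its out-degree is at most 2 and it also
   has a continuation child. *)
Lemma fut_unique v a b : fut C v a -> fut C v b -> a = b.
Proof.
move=> ha hb; apply/eqP; apply: contraT => nab.
have [_ _ _ _ [r [hr _ _]]] := fork_shape ha.
have nr x : fut C v x -> x != r.
  by move=> hx; apply: contraTneq hx => ->; apply: cont_not_fut.
have hu : uniq [:: a; b; r] by rewrite /= !inE negb_or nab !nr.
have : #|[:: a; b; r]| <= outdeg C v.
  apply/subset_leq_card/subsetP=> w; rewrite !inE => /or3P[]/eqP->;
  by [apply: fut_edge|apply: fut_edge|apply: cont_edge].
rewrite (card_uniqP hu) => h3.
have : outdeg C v <= 2.
  by case: Hwf => _ [_ [/(_ v) + _]]; case: eqP => _; [move=> ->|case/andP].
by move/(leq_trans h3).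
Qed.

Lemma last_node_end x y : last_node C x -> connect (cont C) x y -> x = y.
Proof.
move=> hx hxy; apply/eqP; apply: contraT => nxy.
have [q hq _] := connect_first_step hxy nxy.
by move/forallP: hx => /(_ q); rewrite hq.
Qed.

Lemma first_node_start x y : first_node C y -> connect (cont C) x y -> x = y.
Proof.
move=> hy hxy; apply/eqP; apply: contraT => nxy.
have [p _ hp] := connect_last_step hxy nxy.
by move/forallP: hy => /(_ p); rewrite hp.
Qed.

Lemma thread_start x : exists2 f, first_node C f & connect (cont C) f x.
Proof.
elim/(acyclic_ind_pred edge_acyclic): x => x IH.
have [hx|/forallPn[u]] := boolP (first_node C x); first by exists x.
rewrite negbK => hu; have [f hf hfu] := IH u (cont_edge hu).
by exists f => //; apply: connect_trans hfu (connect1 hu).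
Qed.

Lemma thread_end x : exists2 z, last_node C z & connect (cont C) x z.
Proof.
elim/(acyclic_ind_succ edge_acyclic): x => x IH.
have [hx|/forallPn[w]] := boolP (last_node C x); first by exists x.
rewrite negbK => hw; have [z hz hwz] := IH w (cont_edge hw).
by exists z => //; apply: connect_trans (connect1 hw) hwz.
Qed.

Lemma thread_end_unique f g x : last_node C f -> last_node C g ->
  connect (cont C) x f -> connect (cont C) x g -> f = g.
Proof.
move=> hf hg hxf hxg.
have /orP[h|h] := connect_functional_comparable cont_functional hxf hxg.
  exact: last_node_end hf h.
by apply/esym/(last_node_end hg).
Qed.

Lemma first_same_thread l z : first_node C l -> same_thread C l z -> connect (cont C) l z.
Proof. by move=> hl /orP[//|/(first_node_start hl)->]. Qed.

Lemma in_main_reach x : in_main C x -> connect (cont C) (Defs.root C) x.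
Proof.
move=> hm; apply: first_same_thread hm; apply/forallP=> u.
by apply: contraNN (root_no_parent u); apply: cont_edge.
Qed.

Lemma main_thread_ends : connect (cont C) (Defs.root C) (final C).
Proof. by apply: in_main_reach; case: Hwf => _ [_ [_ [_ [_ [h _]]]]]. Qed.

Lemma thread_parent u w p : same_thread C u w -> connect (edge C) u w -> u != w ->
  cont C p w -> connect (cont C) u p.
Proof.
move=> /orP[huw|hwu] hr nuw hpw.
  have [p' hup' hp'w] := connect_last_step huw nuw.
  by rewrite (cont_injective hpw hp'w).
have [q huq hqw] := connect_first_step hr nuw.
have := edge_acyclic huq.
by rewrite (connect_trans hqw (cont_path_edge hwu)).
Qed.

(* The target of a touch edge is not the first node of a thread: first
   nodes other than the root have a future edge as their only in-edge. *)
Lemma tch_local_parent u w : tch C u w -> exists p, cont C p w.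
Proof.
move=> huw; have [|/forallPn[p]] := boolP (first_node C w); last by rewrite negbK; exists p.
move=> hw; have [hm|nm] := boolP (in_main C w).
  have := root_no_parent u; rewrite (first_node_start hw (in_main_reach hm)).
  by rewrite (tch_edge huw).
have [u' hu'w] := thread_spawned hw nm.
have [_ _ hin _ _] := fork_shape hu'w.
have := fut_not_tch hu'w.
by rewrite (indeg1_parent hin (fut_edge hu'w) (tch_edge huw)) huw.
Qed.

Lemma future_thread_fork x : ~~ in_main C x ->
  exists v f r, [/\ fut C v f, cont C v r & connect (cont C) f x].
Proof.
move=> nm; have [f hf hfx] := thread_start x.
have nmf : ~~ in_main C f.
  by apply: contra nm => /in_main_reach hrf; apply/orP; left; apply: connect_trans hrf hfx.
have [v hv] := thread_spawned hf nmf.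
have [_ _ _ _ [r [hr _ _]]] := fork_shape hv.
by exists v, f, r.
Qed.

(* Local touches: the local parent of a touch of the future thread spawned at
   a fork v lies on the thread of v, at or after the right child r of v
   (it differs from v, since r itself is not a touch). *)
Lemma local_parent_after_right v f r v1 u2 x : fut C v f -> cont C v r ->
  connect (cont C) f v1 -> touch_with C v1 u2 x -> connect (cont C) r u2.
Proof.
move=> hvf hvr hfv1 htw; have /and3P[_ _ hu2x] := htw.
have hfv1' : same_thread C f v1 by apply/orP; left.
have [hvx hrx] := Hslt.2 v f r hvf hvr v1 u2 x hfv1' htw.
have hvx' : connect (edge C) v x := connect_trans (connect1 (cont_edge hvr)) hrx.
have nvx : v != x by apply: contraNneq (edge_acyclic (cont_edge hvr)) => ->.
have hvu2 := thread_parent hvx hvx' nvx hu2x.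
have nvu2 : v != u2.
  apply/eqP=> evu2; subst u2; have erx := cont_functional hvr hu2x; subst x.
  have [_ _ _ _ [r' [hr' _ /negP[]]]] := fork_shape hvf.
  by rewrite -(cont_functional hvr hr'); apply/existsP; exists v1; apply/existsP; exists v.
have [q hvq hqu2] := connect_first_step hvu2 nvu2.
by rewrite (cont_functional hvr hvq).
Qed.

(* [spine x dq]: dq lists, outermost first, the right children of the forks
   that spawned the nested future threads containing x; in particular x is on
   the main thread when dq is empty.  This is the shape of the deque while x
   is the current node. *)
Inductive spine : V -> seq V -> Prop :=
| spine_main x : connect (cont C) (Defs.root C) x -> spine x [::]
| spine_future x f v r dq : fut C v f -> cont C v r -> connect (cont C) f x ->
    spine v dq -> spine x (rcons dq r).

Lemma spine_cont x y dq : spine x dq -> connect (cont C) x y -> spine y dq.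
Proof.
case=> [x' hx|x' f v r dq' hvf hvr hfx hv] hxy.
  by apply: spine_main; apply: connect_trans hx hxy.
by apply: spine_future hvf hvr (connect_trans hfx hxy) hv.
Qed.

Lemma spine_right_child x dq y : spine x dq -> y \in dq -> exists v l, fut C v l /\ cont C v y.
Proof.
elim=> [//|x' f v r dq' hvf hvr _ _ IH].
by rewrite mem_rcons inE => /orP[/eqP->|/IH //]; exists v, f.
Qed.

Lemma spine_nil x : spine x [::] -> connect (cont C) (Defs.root C) x.
Proof.
move e: [::] => dq hx; case: hx e => // x' f v r dq' _ _ _ _.
by move/(congr1 size); rewrite size_rcons.
Qed.

Lemma spine_rcons x dq r : spine x (rcons dq r) ->
  exists f v, [/\ fut C v f, cont C v r, connect (cont C) f x & spine v dq].
Proof.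
move e: (rcons dq r) => s hx; case: hx e => [x' _|x' f v r' dq' hvf hvr hfx hv].
  by move/(congr1 size); rewrite size_rcons.
by case/rcons_inj=> -> ->; exists f, v.
Qed.

Definition topo_prefix (d : seq V) : Prop :=
  forall y u, y \in d -> edge C u y -> u \in d /\ index u d < index y d.

Lemma topo_prefix_path d u y : topo_prefix d -> connect (edge C) u y -> y \in d ->
  u \in d /\ index u d <= index y d.
Proof.
move=> htopo /connectP[s]; elim: s u => [|b s IH] u /=; first by move=> _ -> ->.
move=> /andP[hub hp] hy hyd; have [hbd hby] := IH _ hp hy hyd.
have [hud hub'] := htopo _ _ hbd hub.
by split=> //; apply: leq_trans (ltnW hub') hby.
Qed.

Lemma ready_parent d w u : ready C d w -> edge C u w -> u \in d.
Proof. by move=> /forallP /(_ u) /implyP. Qed.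

Lemma ready_rcons d c y : ready C d y -> ready C (rcons d c) y.
Proof.
move/forallP=> h; apply/forallP=> u; apply/implyP=> hu.
by rewrite mem_rcons inE (implyP (h u) hu) orbT.
Qed.

Lemma sole_parent_ready d v w : indeg C w = 1 -> edge C v w -> ready C (rcons d v) w.
Proof.
move=> hin hvw; apply/forallP=> u; apply/implyP=> huw.
by rewrite (indeg1_parent hin huw hvw) mem_rcons mem_head.
Qed.

Lemma mem_ready_children d v w : (w \in ready_children C d v) = edge C v w && ready C d w.
Proof. by rewrite /ready_children mem_filter mem_enum andbT. Qed.

Lemma ready_ancestor d c u : topo_prefix d -> ready C d c ->
  connect (edge C) u c -> u != c -> u \in d.
Proof.
move=> htopo hrc huc nuc; have [p hup hpc] := connect_last_step huc nuc.
by have [] := topo_prefix_path htopo hup (ready_parent hrc hpc).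
Qed.

Lemma child_not_done d v w : topo_prefix d -> v \notin d -> edge C v w ->
  w \notin rcons d v.
Proof.
move=> htopo hvd hvw; rewrite mem_rcons inE negb_or eq_sym edge_neq //=.
by apply: contraNN hvd => hwd; have [] := htopo _ _ hwd hvw.
Qed.

Definition right_follows_last (d : seq V) : Prop :=
  forall v l r z, fut C v l -> cont C v r -> connect (cont C) l z -> last_node C z ->
    r \in d -> exists s1 s2, d = s1 ++ z :: r :: s2.

Definition last_before_right (c : V) (d : seq V) : Prop :=
  forall v l z, fut C v l -> cont C v c -> connect (cont C) l z -> last_node C z ->
    exists d', d = rcons d' z.

(* Executing the current node, every ready child it enables is reached by a
   continuation edge: a touch edge out of it would have its local parent
   executed, hence (local touches) the right child on top of the spine too,
   although deque nodes are not executed. *)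
Lemma ready_child_cont d dq c w : topo_prefix d -> spine c dq -> c \notin d ->
  {in dq, forall y, y \notin d} -> (forall w', ~~ fut C c w') ->
  edge C c w -> ready C (rcons d c) w -> cont C c w.
Proof.
move=> htopo hsp hcd hdq nfork hcw hrw.
case: (edge_kinds hcw) => // [hfut|htch]; first by have := nfork w; rewrite hfut.
exfalso; have [p hpw] := tch_local_parent htch.
have npc : p != c by apply: contraTneq hpw => ->; apply: contraTN htch; apply: cont_not_tch.
have hpd : p \in d.
  by move: (ready_parent hrw (cont_edge hpw)); rewrite mem_rcons inE (negbTE npc).
have [hs|ns] := boolP (same_thread C c w).
  have hcp := thread_parent hs (connect1 hcw) (edge_neq hcw) hpw.
  by have [hc _] := topo_prefix_path htopo (cont_path_edge hcp) hpd; rewrite hc in hcd.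
have htw : touch_with C c p w by rewrite /touch_with htch ns hpw.
case/lastP: dq hsp hdq => [/spine_nil hmain|dq r /spine_rcons[f [v [hvf hvr hfc _]]]] hdq.
  by have := tch_not_main htch; rewrite /in_main /same_thread hmain.
have hrp := local_parent_after_right hvf hvr hfc htw.
have [hrd _] := topo_prefix_path htopo (cont_path_edge hrp) hpd.
by have := hdq r; rewrite mem_rcons mem_head hrd => /(_ isT).
Qed.

(* The continuation child of the current node is ready once the node runs:
   a touch parent u of it lies on a future thread whose right child r
   precedes the current node, so the last node of u's thread, hence u, has
   already been executed. *)
Lemma cont_child_ready d c w : topo_prefix d -> right_follows_last d ->
  last_before_right c d -> ready C d c -> cont C c w -> ready C (rcons d c) w.
Proof.
move=> htopo hright hlast hrc hcw; apply/forallP=> u; apply/implyP=> huw.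
rewrite mem_rcons inE; have [//|nuc /=] := eqVneq u c.
case: (edge_kinds huw) => [hcont|hfut|htch].
- by rewrite (cont_injective hcont hcw) eqxx in nuc.
- have [hfw _ _ _ _] := fork_shape hfut.
  by move/forallP: hfw => /(_ c); rewrite hcw.
have [hs|ns] := boolP (same_thread C u w).
  have huc := thread_parent hs (connect1 huw) (edge_neq huw) hcw.
  exact: ready_ancestor htopo hrc (cont_path_edge huc) nuc.
have htw : touch_with C u c w by rewrite /touch_with htch ns hcw.
have [v [f [r [hvf hvr hfu]]]] := future_thread_fork (tch_not_main htch).
have hrc' := local_parent_after_right hvf hvr hfu htw.
have [z hz huz] := thread_end u.
have hfz := connect_trans hfu huz.
suff hzd : z \in d by have [] := topo_prefix_path htopo (cont_path_edge huz) hzd.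
have [erc|nrc] := eqVneq r c.
  by subst r; have [d' ->] := hlast _ _ _ hvf hvr hfz hz; rewrite mem_rcons mem_head.
have hrd := ready_ancestor htopo hrc (cont_path_edge hrc') nrc.
by have [s1 [s2 ->]] := hright _ _ _ _ hvf hvr hfz hz hrd; rewrite mem_cat mem_head orbT.
Qed.

Definition done_ok (d : seq V) : Prop :=
  [/\ uniq d, topo_prefix d & right_follows_last d].

Definition deque_ok (dq d : seq V) : Prop :=
  uniq dq /\ {in dq, forall y, y \notin d /\ ready C d y}.

Definition running_ok (c : V) (dq d : seq V) : Prop :=
  [/\ c \notin d, c \notin dq, ready C d c, spine c dq & last_before_right c d].

Definition idle_ok (dq d : seq V) : Prop :=
  exists d' z, [/\ d = rcons d' z, last_node C z & spine z dq].

Definition invariant (s : config V) : Prop :=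
  let: (cur, dq, d) := s in
  [/\ done_ok d, deque_ok dq d &
      if cur is Some c then running_ok c dq d else idle_ok dq d].

Lemma execute_done_ok d c : done_ok d -> c \notin d -> ready C d c ->
  last_before_right c d -> done_ok (rcons d c).
Proof.
move=> [hu htopo hright] hcd hrc hlast; split.
- by rewrite rcons_uniq hcd hu.
- move=> y u; rewrite -!cats1 mem_cat inE => /orP[hy|/eqP->] he.
    have [hud hlt] := htopo _ _ hy he.
    by rewrite mem_cat hud !index_cat hud hy.
  have hud := ready_parent hrc he.
  by rewrite mem_cat hud !index_cat hud (negbTE hcd) /= eqxx addn0 index_mem.
- move=> v l r z hvl hvr hlz hz; rewrite mem_rcons inE => /orP[/eqP erc|hrd].
    subst r; have [d' ->] := hlast _ _ _ hvl hvr hlz hz.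
    by exists d', [::]; rewrite -!cats1 -catA.
  have [s1 [s2 ->]] := hright _ _ _ _ hvl hvr hlz hz hrd.
  by exists s1, (rcons s2 c); rewrite rcons_cat.
Qed.

Lemma execute_deque_ok dq d c : deque_ok dq d -> c \notin dq -> deque_ok dq (rcons d c).
Proof.
move=> [hu hdq] hc; split=> // y hy; have [hyd hry] := hdq y hy.
split; last exact: ready_rcons.
by rewrite mem_rcons inE negb_or hyd andbT; apply: contraNneq hc => <-.
Qed.

Lemma invariant_init : invariant (Some (Defs.root C), [::], [::]).
Proof.
split=> //; split=> //.
- by apply/forallP=> u; apply/implyP=> h; have := root_no_parent u; rewrite h.
- exact/spine_main/connect0.
- by move=> v l z _ /cont_edge h; have := root_no_parent v; rewrite h.
Qed.

Lemma invariant_fork v l r dq d : fut C v l -> cont C v r ->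
  invariant (Some v, dq, d) -> invariant (Some l, rcons dq r, rcons d v).
Proof.
move=> hvl hvr [hdone [hudq hdq] [hvd hvdq hrv hsp hlast]].
have [hfl _ hinl _ [r' [/(cont_functional hvr) er hinr _]]] := fork_shape hvl.
subst r'.
have [_ htopo _] := hdone.
have not_cont_l u : ~~ cont C u l by move/forallP: hfl.
split; first exact: execute_done_ok.
  split.
    rewrite rcons_uniq hudq andbT.
    by apply: contraNN hvd => /hdq[_ /ready_parent]; apply; apply: cont_edge.
  move=> y; rewrite [y \in rcons dq r]mem_rcons in_cons => /orP[/eqP->|hy].
    split; first exact: child_not_done htopo hvd (cont_edge hvr).
    exact: sole_parent_ready hinr (cont_edge hvr).
  exact: (execute_deque_ok (conj hudq hdq) hvdq).2.
split.
- exact: child_not_done htopo hvd (fut_edge hvl).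
- rewrite mem_rcons inE negb_or; apply/andP; split.
    by apply: contraTneq hvr => <-; apply: not_cont_l.
  by apply/negP=> /(spine_right_child hsp)[v0 [l0 [_ hc]]]; move: (not_cont_l v0); rewrite hc.
- exact: sole_parent_ready (fut_edge hvl).
- exact: spine_future hvl hvr (connect0 _ _) hsp.
- by move=> v0 l0 z _ hc; move: (not_cont_l v0); rewrite hc.
Qed.

Lemma invariant_stall v dq d : ready_children C (rcons d v) v = [::] ->
  invariant (Some v, dq, d) -> invariant (None, dq, rcons d v).
Proof.
move=> hnone [hdone hdeque [hvd hvdq hrv hsp hlast]].
have [_ htopo hright] := hdone.
split; [exact: execute_done_ok|exact: execute_deque_ok|exists d, v; split=> //].
apply/forallP=> w; apply/negP=> hvw.
have hrw := cont_child_ready htopo hright hlast hrv hvw.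
have : w \in ready_children C (rcons d v) v by rewrite mem_ready_children (cont_edge hvw).
by rewrite hnone.
Qed.

(* A non-fork node continues with its only ready child, its continuation
   child, so nothing is pushed. *)
Lemma invariant_cont v w rest dq d : (forall w', ~~ fut C v w') ->
  perm_eq (w :: rest) (ready_children C (rcons d v) v) ->
  invariant (Some v, dq, d) -> invariant (Some w, dq ++ rest, rcons d v).
Proof.
move=> nfork hperm [hdone hdeque [hvd hvdq hrv hsp hlast]].
have [_ htopo _] := hdone; have [_ hdq] := hdeque.
have hchild y : y \in w :: rest -> cont C v y /\ ready C (rcons d v) y.
  rewrite (perm_mem hperm) mem_ready_children => /andP[hvy hry]; split=> //.
  exact: ready_child_cont htopo hsp hvd (fun y hy => (hdq y hy).1) nfork hvy hry.
have [hvw hrw] := hchild w (mem_head _ _).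
have -> : rest = [::].
  have : uniq (w :: rest).
    by rewrite (perm_uniq hperm) /ready_children filter_uniq // enum_uniq.
  case: rest hchild {hperm} => // y rest hchild.
  have /hchild[hvy _] : y \in [:: w, y & rest] by rewrite !inE eqxx orbT.
  by rewrite /= -(cont_functional hvw hvy) mem_head.
have not_right v0 l0 : fut C v0 l0 -> ~~ cont C v0 w.
  by apply: contraTN => /cont_injective/(_ hvw)->; apply: nfork.
rewrite cats0; split; [exact: execute_done_ok|exact: execute_deque_ok|split=> //].
- exact: child_not_done htopo hvd (cont_edge hvw).
- by apply/negP=> /(spine_right_child hsp)[v0 [l0 [/not_right/negP]]].
- exact: spine_cont hsp (connect1 hvw).
- by move=> v0 l0 z /not_right/negP.
Qed.

(* An idle processor resumes the bottom of its deque: the right child of the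
   fork that spawned the thread whose last node was just executed. *)
Lemma invariant_pop w dq d : invariant (None, rcons dq w, d) -> invariant (Some w, dq, d).
Proof.
move=> [hdone [hudq hdq] [d' [z [ed hz hsp]]]].
move: hudq; rewrite rcons_uniq => /andP[hwdq hudq].
have /hdq[hwd hwr] : w \in rcons dq w by rewrite mem_rcons mem_head.
have [f [v [hvf hvw hfz hspv]]] := spine_rcons hsp.
split=> //.
  by split=> // y hy; apply: hdq; rewrite mem_rcons inE hy orbT.
split=> //; first exact: spine_cont hspv (connect1 hvw).
move=> v0 l0 z0 hf0 hc0 hl0 hz0.
have ev := cont_injective hc0 hvw; subst v0.
have el := fut_unique hf0 hvf; subst l0.
by rewrite (thread_end_unique hz0 hz hl0 hfz); exists d'.
Qed.

Lemma invariant_steps s1 s2 : seq_steps C s1 s2 -> invariant s1 -> invariant s2.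
Proof.
elim=> // c1 c2 c3 hstep _ IH hinv; apply: IH; case: hstep hinv.
- exact: invariant_fork.
- by move=> v dq d _; apply: invariant_stall.
- exact: invariant_cont.
- exact: invariant_pop.
Qed.

Lemma execution_complete ex : sequential_execution C ex ->
  [/\ uniq ex, topo_prefix ex, right_follows_last ex & forall x, x \in ex].
Proof.
move=> /invariant_steps/(_ invariant_init)[[hu htopo hright] _ [d' [z [ed hz hsp]]]].
have ezf := thread_end_unique hz final_last (spine_nil hsp) main_thread_ends.
split=> // x; have hfin : final C \in ex by rewrite ed -ezf mem_rcons mem_head.
by have [] := topo_prefix_path htopo (reach_final x) hfin.
Qed.

Lemma right_child_after_last ex v l r z : sequential_execution C ex ->
  fut C v l -> cont C v r -> connect (cont C) l z -> last_node C z ->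
  exists s1 s2, ex = s1 ++ z :: r :: s2.
Proof.
move=> hex hvl hvr hlz hz; have [_ _ hright hall] := execution_complete hex.
exact: hright _ _ _ _ hvl hvr hlz hz (hall r).
Qed.

(* First claim: the future parent v1 of a touch runs before its local parent
   u2, because v1 <= z < r <= u2 in execution order, where z is the last node
   of v1's thread and r the right child of the fork spawning that thread. *)
Lemma future_parent_first ex v1 u2 x : sequential_execution C ex ->
  touch_with C v1 u2 x -> exists s1 s2 s3, ex = s1 ++ v1 :: s2 ++ u2 :: s3.
Proof.
move=> hex htw; have [hu htopo _ hall] := execution_complete hex.
have /and3P[htch _ _] := htw.
have [v [f [r [hvf hvr hfv1]]]] := future_thread_fork (tch_not_main htch).
have hru2 := local_parent_after_right hvf hvr hfv1 htw.
have [z hz hv1z] := thread_end v1.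
have [s1 [s2 hex_eq]] := right_child_after_last hex hvf hvr (connect_trans hfv1 hv1z) hz.
have [_ hv1_z] := topo_prefix_path htopo (cont_path_edge hv1z) (hall z).
have [_ hr_u2] := topo_prefix_path htopo (cont_path_edge hru2) (hall u2).
have hz_r : index z ex < index r ex by rewrite hex_eq index_adjacent // -hex_eq.
apply: index_lt_split (hall v1) (hall u2) _.
exact: leq_ltn_trans hv1_z (leq_trans hz_r hr_u2).
Qed.
End Computation.

Theorem mainTheorem6 (V : finType) (C : fcomp V) (ex : seq V) :
  wf_comp C -> structured_local_touch C -> sequential_execution C ex ->
  (* future parent of every touch is executed before its local parent *)
  (forall v1 u2 x, touch_with C v1 u2 x ->
     exists s1 s2 s3, ex = s1 ++ v1 :: s2 ++ u2 :: s3) /\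
  (* the right child of every fork is executed immediately after the last node
     of the future thread spawned at that fork *)
  (forall v l r z, fut C v l -> cont C v r -> same_thread C l z -> last_node C z ->
     exists s1 s2, ex = s1 ++ z :: r :: s2).
Proof.
move=> Hwf Hslt Hex; split=> [v1 u2 x htw|v l r z hvl hvr hlz hz].
  exact: (future_parent_first Hwf Hslt Hex htw).
have [hfl _ _ _ _] := fork_shape Hwf hvl.
exact: (right_child_after_last Hwf Hslt Hex hvl hvr (first_same_thread hfl hlz) hz).
Qed.
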